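(* Let $\mathbf{f}$ be a simple problem. Then for every subproblem $\mathbf{g}\subseteq\mathbf{f}$, $X^*(\mathbf{g})\subseteq X^*(\mathbf{f})$.
   Context: A problem is a finite set $\mathbf{f}=\{f_1,\dots,f_m\}$ of functions $f_i:\mathbb{R}^n\to\mathbb{R}$ together with a feasible region $X\subseteq\mathbb{R}^n$, to be minimized simultaneously. A subproblem $\mathbf{g}\subseteq\mathbf{f}$ is a subset of these functions (including $\emptyset$ and $\mathbf{f}$), with the same $X$; its evaluation map is $x\mapsto(f_i(x))_{f_i\in\mathbf{g}}\in\mathbb{R}^{|\mathbf{g}|}$. For $x,y\in X$, $x$ $\mathbf{g}$-dominates $y$ if $f_i(x)\le f_i(y)$ for all $f_i\in\mathbf{g}$ and $f_j(x)<f_j(y)$ for some $f_j\in\mathbf{g}$. The Pareto set $X^*(\mathbf{g})$ is the set of $x^*\in X$ not $\mathbf{g}$-dominated by any $x\in X$; by convention $X^*(\emptyset)=\emptyset$. A problem $\mathbf{f}$ is simple if every subproblem $\mathbf{g}\subseteq\mathbf{f}$ with $k=|\mathbf{g}|$ objectives satisfies: (S1) $X^*(\mathbf{g})$ is homeomorphic to $\Delta^{k-1}=\{t\in[0,1]^k:\sum t_i=1\}$ (with $\Delta^{-1}=\emptyset$); (S2) the evaluation map of $\mathbf{g}$ restricted to $X^*(\mathbf{g})$ is a topological embedding into $\mathbb{R}^k$. All sets carry the subspace topology from Euclidean space. *)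

From Stdlib Require Import Reals List Arith.
Import ListNotations.
Open Scope R_scope.

Definition Rn (n : nat) : Type := {i : nat | (i < n)%nat} -> R.

Definition ext (k : nat) (t : Rn k) (j : nat) : R :=
  match lt_dec j k with
  | left H => t (exist _ j H)
  | right _ => 0
  end.
Definition coord_sum (k : nat) (t : Rn k) : R :=
  fold_right Rplus 0 (map (ext k t) (seq 0 k)).

(* Standard simplex Delta^{k-1} in R^k (empty when k = 0). *)
Definition simplex (k : nat) (t : Rn k) : Prop :=
  (forall j, 0 <= t j <= 1) /\ coord_sum k t = 1.

(* Subspace topology from Euclidean space. We use sup-norm balls
   (forall i, |x i - y i| < eps), which generate the Euclidean topology. *)
Definition near {n : nat} (x y : Rn n) (eps : R) : Prop :=
  forall i, Rabs (x i - y i) < eps.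

Definition continuous_on {a b : nat} (A : Rn a -> Prop) (h : Rn a -> Rn b) : Prop :=
  forall x, A x -> forall eps, eps > 0 ->
    exists delta, delta > 0 /\
      forall y, A y -> near x y delta -> near (h x) (h y) eps.

Definition homeomorphic {a b : nat} (A : Rn a -> Prop) (B : Rn b -> Prop) : Prop :=
  exists (h : Rn a -> Rn b) (g : Rn b -> Rn a),
    (forall x, A x -> B (h x)) /\
    (forall y, B y -> A (g y)) /\
    (forall x, A x -> g (h x) = x) /\
    (forall y, B y -> h (g y) = y) /\
    continuous_on A h /\ continuous_on B g.

Definition embedding_on {a b : nat} (A : Rn a -> Prop) (e : Rn a -> Rn b) : Prop :=
  (forall x y, A x -> A y -> e x = e y -> x = y) /\
  continuous_on A e /\
  (forall x, A x -> forall eps, eps > 0 ->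
     exists delta, delta > 0 /\
       forall y, A y -> near (e x) (e y) delta -> near x y eps).

(* A problem: objectives f 0, ..., f (m-1) : R^n -> R (pairwise distinct, so
   that they form a set of m functions) and feasible region X.
   A subproblem is a finite subset of the objectives, given by a duplicate-free
   list l of indices < m (any enumeration of the subset). *)
Definition subproblem (m : nat) (l : list nat) : Prop :=
  NoDup l /\ forall i, In i l -> (i < m)%nat.

Definition dominates {n : nat} (f : nat -> Rn n -> R) (l : list nat)
  (x y : Rn n) : Prop :=
  (forall i, In i l -> f i x <= f i y) /\ (exists j, In j l /\ f j x < f j y).

(* Pareto set X*(g); by convention X*(empty) = empty. *)
Definition pareto {n : nat} (f : nat -> Rn n -> R) (X : Rn n -> Prop)
  (l : list nat) (x : Rn n) : Prop :=
  l <> [] /\ X x /\ ~ (exists y, X y /\ dominates f l y x).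

Definition eval_map {n : nat} (f : nat -> Rn n -> R) (l : list nat)
  (x : Rn n) : Rn (length l) :=
  fun j => f (nth (proj1_sig j) l 0%nat) x.

Definition simple_problem {n : nat} (m : nat) (f : nat -> Rn n -> R)
  (X : Rn n -> Prop) : Prop :=
  forall l, subproblem m l ->
    homeomorphic (pareto f X l) (simplex (length l)) /\
    embedding_on (pareto f X l) (eval_map f l).

(* If some y dominated x for the whole problem while x is Pareto optimal for
   the subproblem g, then y could not improve any objective of g, so y agrees
   with x on g and is itself g-Pareto optimal.  The evaluation map of g is
   injective on X*(g) by (S2), hence y = x, contradicting the strict
   improvement.  Only injectivity from (S2) is used. *)
From Stdlib Require Import Reals List Arith Lra Lia FunctionalExtensionality.
Import ListNotations.

Section ParetoInclusion.

Variables (n : nat) (f : nat -> Rn n -> R) (X : Rn n -> Prop).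

Lemma nondominated_weak_improvement_eq (l l' : list nat) (x y : Rn n) :
  incl l l' -> ~ (exists z, X z /\ dominates f l z x) -> X y ->
  (forall i, In i l' -> f i y <= f i x) ->
  forall i, In i l -> f i y = f i x.
Proof.
  intros Hincl Hnd HY Hle i Hi.
  destruct (Rle_lt_or_eq_dec _ _ (Hle i (Hincl i Hi))) as [Hlt | Heq]; auto.
  exfalso; apply Hnd; exists y; split; [exact HY | split].
  - intros k Hk; apply Hle, Hincl, Hk.
  - exists i; auto.
Qed.

Lemma pareto_eq_on (l : list nat) (x y : Rn n) :
  pareto f X l x -> X y -> (forall i, In i l -> f i y = f i x) ->
  pareto f X l y.
Proof.
  intros [Hne [_ Hnd]] HY Heq; repeat split; auto.
  intros [z [HZ [Hzl [k [Hk Hzk]]]]].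
  apply Hnd; exists z; repeat split; auto.
  - intros i Hi; rewrite <- Heq by exact Hi; auto.
  - exists k; rewrite <- Heq by exact Hk; auto.
Qed.

Lemma eval_map_eq_on (l : list nat) (x y : Rn n) :
  (forall i, In i l -> f i x = f i y) -> eval_map f l x = eval_map f l y.
Proof.
  intros Heq; apply functional_extensionality; intros [k Hk].
  apply Heq, nth_In, Hk.
Qed.

Lemma pareto_incl (l l' : list nat) :
  incl l l' ->
  (forall x y, pareto f X l x -> pareto f X l y ->
     eval_map f l x = eval_map f l y -> x = y) ->
  forall x, pareto f X l x -> pareto f X l' x.
Proof.
  intros Hincl Hinj x Hpx.
  pose proof Hpx as [Hne [HX Hnd]].
  split; [| split; [exact HX |]].
  - destruct l as [|a l]; [congruence|].
    intros ->; exact (Hincl a (or_introl eq_refl)).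
  - intros [y [HY [Hle [j [Hj Hlt]]]]].
    assert (Heq := nondominated_weak_improvement_eq l l' x y Hincl Hnd HY Hle).
    assert (y = x) as ->.
    { apply Hinj; [exact (pareto_eq_on l x y Hpx HY Heq) | exact Hpx |].
      apply eval_map_eq_on, Heq. }
    lra.
Qed.

End ParetoInclusion.

Theorem proposition3 (n m : nat) (f : nat -> Rn n -> R) (X : Rn n -> Prop)
  (Hdistinct : forall i j, (i < m)%nat -> (j < m)%nat -> f i = f j -> i = j)
  (Hsimple : simple_problem m f X) :
  forall l, subproblem m l ->
  forall x, pareto f X l x -> pareto f X (seq 0 m) x.
Proof.
  intros l Hl.
  apply pareto_incl.
  - intros i Hi; apply in_seq; split; [lia | exact (proj2 Hl i Hi)].
  - exact (proj1 (proj2 (Hsimple l Hl))).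
Qed.
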